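(* For $n\ge 2$, let $\mathfrak{C}_n$ be the set of trees on the vertex set $\{1,\dots,n\}$ and define $$G_n(x,y,z)=\sum_{t\in\mathfrak{C}_n}x^{\deg_1(t)}y^{\deg'_2(t)}z^{|L_1(t)|}.$$ Then $G_n(x,y,z)=G_n(y,x,z)$ for all $n\ge 2$.
   Context: $\deg_k(t)$ is the degree of vertex $k$ in $t$. For a tree $t$ with vertices labeled by distinct integers and a vertex $i$, consider the path of vertices $v_0=i,v_1,\dots,v_\ell$ defined by: for each $m\ge 0$, if $v_m$ has a neighbor with label larger than $v_m$, then $v_{m+1}$ is the neighbor of $v_m$ with the smallest label among those neighbors with label larger than $v_m$; otherwise the path stops at $v_m$. Then $L_i(t)=\{v_1,\dots,v_\ell\}$, and $\deg'_2(t)$ denotes the degree in $t$ of the last vertex $v_\ell$ of this path started at $i=1$. Equivalently, $G_n(x,y,z)=n^{n-2}\mathbb{E}[x^{\mathbb{T}_1}y^{\mathbb{T}_2}z^{\mathbb{M}_1}]$ for a uniform minimal factorization $(\tau_1,\dots,\tau_{n-1})$ of $(1~2\dots n)$ (i.e. $\tau_{n-1}\circ\dots\circ\tau_1=(1~2\dots n)$), where $\mathbb{T}_k$ is the number of transpositions containing $k$ and $\mathbb{M}_1$ is the number of transpositions that move the trajectory of $1$. *)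

From mathcomp Require Import all_boot all_order all_algebra.
Set Implicit Arguments. Unset Strict Implicit. Unset Printing Implicit Defensive.
Import GRing.Theory.

(* Labeled trees on the vertex set {1,...,m+1}, represented by the ordinals
   'I_m.+1 = {0,...,m}; the ordinal i stands for the label i+1 (order-preserving
   relabeling). A graph is a set of edges, each edge a 2-element vertex set. *)

Section Trees.
Variable m : nat.
Local Notation V := 'I_m.+1.

Definition adj (E : {set {set V}}) : rel V := fun u v => [set u; v] \in E.

Definition is_tree (E : {set {set V}}) : bool :=
  [forall e in E, #|e| == 2] &&
  (#|E| == m) &&
  [forall u, forall v, connect (adj E) u v].

Definition deg (E : {set {set V}}) (v : V) : nat := #|[set u | adj E v u]|.

Definition next_up (E : {set {set V}}) (v : V) : option V :=
  [pick u | [&& adj E v u, v < u &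
     [forall w, (adj E v w && (v < w)) ==> (u <= w)]]].

Fixpoint upath (E : {set {set V}}) (fuel : nat) (v : V) : seq V :=
  if fuel is f.+1 then
    if next_up E v is Some u then u :: upath E f u else [::]
  else [::].

(* L_v(t); fuel m.+1 suffices since labels strictly increase *)
Definition Lpath (E : {set {set V}}) (v : V) : seq V := upath E m.+1 v.

Definition Gaux (R : comNzRingType) (x y z : R) : R :=
  \sum_(E : {set {set V}} | is_tree E)
     x ^+ deg E ord0 * y ^+ deg E (last ord0 (Lpath E ord0))
       * z ^+ size (Lpath E ord0).
End Trees.

Definition G (R : comNzRingType) (n : nat) (x y z : R) : R :=
  match n with 0 => 0 | m.+1 => Gaux m x y z end.

From mathcomp Require Import all_boot all_order all_algebra.
From mathcomp Require Import zify.
Set Implicit Arguments. Unset Strict Implicit. Unset Printing Implicit Defensive.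
Import GRing.Theory.

(* Let 1 = v_0 < v_1 < ... < v_l be the vertex 1 followed by the path L_1(t),
   let rho be the cyclic permutation v_0 -> v_1 -> ... -> v_l -> v_0 fixing
   every other vertex, and let mu fix 1 and send each label k >= 2 to
   n + 2 - k.  Relabel t by mu o rho.  Since mu reverses the order of the
   labels >= 2, each minimal step v_i -> v_(i+1) of the old path becomes a
   minimal step mu(v_(i+1)) -> mu(v_i) of the new one, so the path from 1 in
   the new tree t' is mu(v_l), ..., mu(v_1).  Hence |L_1(t')| = |L_1(t)|,
   deg_1(t') = deg'_2(t) and deg'_2(t') = deg_1(t).  Finally t |-> t' is an
   involution: the cycle of t' is the image under mu o rho of the reversed
   cycle of t, so its rotation is mu o rho^-1 o mu, and the second
   relabelling mu o (mu o rho^-1 o mu) undoes the first. *)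

Lemma homo_connect (T : finType) (e e' : rel T) (f : T -> T) :
  {homo f : x y / e x y >-> e' x y} ->
  {homo f : x y / connect e x y >-> connect e' x y}.
Proof.
move=> fh x y /connectP[p pxp ->]; apply/connectP.
by exists (map f p); [exact: homo_path fh pxp | rewrite last_map].
Qed.

Section Relabel.
Variables (m : nat) (f : 'I_m.+1 -> 'I_m.+1).

Definition relabel (E : {set {set 'I_m.+1}}) : {set {set 'I_m.+1}} :=
  [set f @: e | e : {set 'I_m.+1} in E].

Hypothesis f_inj : injective f.

Lemma adj_relabel E a b : adj (relabel E) (f a) (f b) = adj E a b.
Proof.
rewrite /adj.
have -> : [set f a; f b] = f @: [set a; b] by rewrite imsetU1 imset_set1.
apply/imsetP/idP => [[e Ee /imset_inj-> //] | Eab]; by exists [set a; b].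
Qed.

Lemma deg_relabel E a : deg (relabel E) (f a) = deg E a.
Proof.
have [g _ gK] := injF_bij f_inj.
rewrite /deg -(card_imset [set u | adj E a u] f_inj); apply: eq_card => u.
by rewrite -[u]gK mem_imset // !inE adj_relabel.
Qed.

Lemma is_tree_relabel E : is_tree E -> is_tree (relabel E).
Proof.
have [g _ gK] := injF_bij f_inj.
case/andP => /andP[/forall_inP edges2 cardE] /forallP conn.
apply/andP; split; first (apply/andP; split).
- apply/forall_inP => _ /imsetP[e Ee ->]; rewrite card_imset //; exact: edges2.
- by rewrite card_imset //; exact: imset_inj.
- apply/forallP => a; apply/forallP => b; rewrite -(gK a) -(gK b).
  apply: homo_connect (forallP (conn (g a)) (g b)) => u v.
  by rewrite adj_relabel.
Qed.

End Relabel.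

Lemma relabelK m (f g : 'I_m.+1 -> 'I_m.+1) E :
  cancel f g -> relabel g (relabel f E) = E.
Proof.
move=> fK; rewrite /relabel -imset_comp -[RHS]imset_id.
apply: eq_imset => e /=; rewrite -imset_comp -[RHS]imset_id.
by apply: eq_imset => x /=.
Qed.

Section UpPath.
Variables (m : nat) (E : {set {set 'I_m.+1}}).
Implicit Types (u v w : 'I_m.+1) (s : seq 'I_m.+1).

Lemma adjC : symmetric (adj E).
Proof. by move=> u v; rewrite /adj setUC. Qed.

Lemma next_up_SomeP v u :
  next_up E v = Some u <->
  [/\ adj E v u, v < u & forall w, adj E v w -> v < w -> u <= w].
Proof.
rewrite /next_up; split.
- case: pickP => // u' /and3P[vu' ltvu' /forallP min] [<-].
  by split=> // w vw ltvw; have := min w; rewrite vw ltvw.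
- move=> [vu ltvu min]; case: pickP => [u' /and3P[vu' ltvu' /forallP min'] | none].
  + congr Some; apply/val_inj/eqP; rewrite eqn_leq min // andbT.
    by have := min' u; rewrite vu ltvu /=.
  + move: (none u); rewrite vu ltvu /= => /negbT/negP; case.
    by apply/forallP => w; apply/implyP => /andP[]; exact: min.
Qed.

Lemma next_up_NoneP v : next_up E v = None <-> forall w, adj E v w -> w <= v.
Proof.
rewrite /next_up; split.
- case: pickP => // none _ w vw; rewrite leqNgt; apply/negP => ltvw.
  have above_w : [pred u | adj E v u && (v < u)] w by rewrite /= vw ltvw.
  case: (arg_minnP val above_w) => u /andP[vu ltvu] min.
  move: (none u); rewrite vu ltvu /= => /negbT/negP; case.
  apply/forallP => w'; apply/implyP => /andP[vw' ltvw'].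
  by apply: min; rewrite /= vw'.
- move=> below; case: pickP => // u /and3P[vu ltvu _].
  by have := below u vu; rewrite leqNgt ltvu.
Qed.

Fixpoint up_chain v s : Prop :=
  if s is u :: s' then next_up E v = Some u /\ up_chain u s'
  else next_up E v = None.

Lemma up_chain_upath fuel v : m - v < fuel -> up_chain v (upath E fuel v).
Proof.
elim: fuel v => // fuel IH v lt /=; case e: (next_up E v) => [u|] //=.
split=> //; apply: IH; have [_ vu _] := (next_up_SomeP _ _).1 e.
have := ltn_ord u; lia.
Qed.

Lemma up_chain_inj v s1 s2 : up_chain v s1 -> up_chain v s2 -> s1 = s2.
Proof.
elim: s1 v s2 => [|u s1 IH] v [|u2 s2] //=; first by move=> -> [].
- by move=> [-> _].
- by move=> [-> C1] [[<-] C2]; rewrite (IH _ _ C1 C2).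
Qed.

Lemma up_chain_Lpath v s : up_chain v s -> Lpath E v = s.
Proof. by apply: up_chain_inj; apply: up_chain_upath; lia. Qed.

Lemma up_chain_next v s k :
  up_chain v s -> k < size s -> next_up E (nth v (v :: s) k) = Some (nth v s k).
Proof.
elim: s v k => [|u s IH] v [|k] //= [vu Cu] lt_k; first exact: vu.
rewrite (set_nth_default u) 1?(set_nth_default u v) //; [exact: IH | exact: ltnW].
Qed.

Lemma up_chain_last v s : up_chain v s -> next_up E (last v s) = None.
Proof. by elim: s v => [|u s IH] v //= [_ /IH]. Qed.

Definition upseq : seq 'I_m.+1 := ord0 :: Lpath E ord0.

Local Notation len := (size (Lpath E ord0)).

(* Beyond the end, [upv k] is the junk default [ord0]; in particular the
   cyclic successor of the last vertex is [upv len.+1 = ord0]. *)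
Definition upv k : 'I_m.+1 := nth ord0 upseq k.

Definition rot_up : 'I_m.+1 -> 'I_m.+1 := next upseq.

Lemma next_up_upv k : k < len -> next_up E (upv k) = Some (upv k.+1).
Proof. by apply: up_chain_next; apply: up_chain_upath; lia. Qed.

Lemma upv_last : upv len = last ord0 (Lpath E ord0).
Proof. exact: (nth_last ord0 upseq). Qed.

Lemma next_up_upv_last : next_up E (upv len) = None.
Proof. by rewrite upv_last; apply: up_chain_last; apply: up_chain_upath; lia. Qed.

Lemma ltn_upv i j : i <= len -> j <= len -> (upv i < upv j) = (i < j).
Proof.
have homo : {in [pred k | k <= len] &, {homo (fun k => val (upv k)) : a b / a < b}}.
  apply: homo_ltn_in => [y x z | a b _ /= hb k /andP[_ kb] | k _ /= hk].
  - exact: ltn_trans.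
  - exact: leq_trans (ltnW kb) hb.
  - by have [_ ? _] := (next_up_SomeP _ _).1 (next_up_upv hk).
move=> hi hj; case: (ltngtP i j) => [ij | ji | ->]; last exact: ltnn.
- exact: homo hi hj ij.
- by apply/negbTE; rewrite -leqNgt; apply/ltnW/(homo j i hj hi ji).
Qed.

Lemma leq_upv i j : i <= len -> j <= len -> (upv i <= upv j) = (i <= j).
Proof. by move=> hi hj; rewrite leqNgt ltn_upv // -leqNgt. Qed.

Lemma upv_gt0 k : 0 < k -> k <= len -> 0 < upv k.
Proof. by move=> k_gt0 hk; rewrite -[X in X < _]/(val (upv 0)) ltn_upv. Qed.

Lemma uniq_upseq : uniq upseq.
Proof.
apply/(uniqP ord0) => i j hi hj /(congr1 val) e.
have {}hi : i <= len := hi; have {}hj : j <= len := hj.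
by apply/eqP; rewrite eqn_leq -(leq_upv hi hj) -(leq_upv hj hi) e leqnn.
Qed.

Lemma rot_up_upv q : q <= len -> rot_up (upv q) = upv q.+1.
Proof.
move=> hq; rewrite /rot_up next_nth mem_nth ?ltnS //.
by rewrite index_uniq ?ltnS //; exact: uniq_upseq.
Qed.

Lemma rot_up_notin u : u \notin upseq -> rot_up u = u.
Proof. by move=> u_out; rewrite /rot_up next_nth (negbTE u_out). Qed.

(* A neighbour u of v_i is either off the path, and then v_(i+1) <= u by the
   minimality of the step v_i -> v_(i+1), or it is some v_q, and then
   rot_up u = v_(q+1) lies above v_i only if i <= q. *)
Lemma rot_up_adj i u : i <= len -> adj E (upv i) u -> upv i < rot_up u ->
  i < len /\ upv i.+1 <= rot_up u.
Proof.
move=> hi viu lt.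
have [u_on | /rot_up_notin u_fix] := boolP (u \in upseq).
- have hq : index u upseq <= len by rewrite -ltnS index_mem.
  move: lt; rewrite -(nth_index ord0 u_on) rot_up_upv //.
  case: (ltnP (index u upseq) len) => hq'.
  + rewrite ltn_upv // ltnS => iq.
    have i_lt : i < len by exact: leq_ltn_trans iq hq'.
    by split=> //; rewrite leq_upv.
  + by rewrite [upv _.+1]/upv nth_default ?ltnS.
- rewrite u_fix in lt *; case: (ltnP i len) => hi'.
  + have [_ _ min] := (next_up_SomeP _ _).1 (next_up_upv hi').
    by split=> //; exact: min.
  + have e : i = len by apply/eqP; rewrite eqn_leq hi hi'.
    subst i; have := (next_up_NoneP _).1 next_up_upv_last u viu.
    by rewrite leqNgt lt.
Qed.

End UpPath.

(* The ordinal a stands for the label a + 1, so the relabelling that fixes 1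
   and sends each label k >= 2 to n + 2 - k is the negation a |-> -a modulo
   n = m + 1. *)
Section OrdOpp.
Variable m : nat.
Implicit Types a b : 'I_m.+1.

Lemma val_opp_ord a : 0 < a -> val (- a)%R = m.+1 - a.
Proof. by move=> a_gt0; rewrite /= modn_small //; have := ltn_ord a; lia. Qed.

Lemma opp_ord_gt0 a : (0 < (- a)%R) = (0 < a).
Proof.
case: (posnP a) => [a0 | a_gt0]; first by rewrite /= a0 subn0 modnn.
by rewrite val_opp_ord //; have := ltn_ord a; lia.
Qed.

Lemma ltn_opp_ord a b : 0 < a -> 0 < b -> ((- a)%R < (- b)%R) = (b < a).
Proof. by move=> a_gt0 b_gt0; rewrite !val_opp_ord //; have := ltn_ord a; lia. Qed.

Lemma leq_opp_ord a b : 0 < a -> 0 < b -> ((- a)%R <= (- b)%R) = (b <= a).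
Proof. by move=> a_gt0 b_gt0; rewrite !val_opp_ord //; have := ltn_ord a; lia. Qed.

End OrdOpp.

Section Swap.
Variables (m : nat) (E : {set {set 'I_m.+1}}).
Local Notation len := (size (Lpath E ord0)).
Local Notation v := (upv E).

Definition swap_map (a : 'I_m.+1) : 'I_m.+1 := (- rot_up E a)%R.

Definition swap_tree : {set {set 'I_m.+1}} := relabel swap_map E.

Lemma swap_map_inj : injective swap_map.
Proof. by move=> a b /oppr_inj /(can_inj (prev_next (uniq_upseq E))). Qed.

Lemma swap_map_upv q : q <= len -> swap_map (v q) = (- v q.+1)%R.
Proof. by move=> hq; rewrite /swap_map rot_up_upv. Qed.

Lemma swap_map_upv_last : swap_map (v len) = ord0.
Proof. by rewrite swap_map_upv // [upv _ _.+1]/upv nth_default ?oppr0. Qed.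

Lemma swap_map_adj_gt i u : i <= len -> adj E (v i) u ->
  swap_map (v i) < swap_map u -> 0 < i /\ swap_map (v i.-1) <= swap_map u.
Proof.
move=> hi viu lt.
have rot_gt0 : 0 < rot_up E u by rewrite -opp_ord_gt0; exact: leq_ltn_trans lt.
case: (ltnP (v i) (rot_up E u)) => [above | below].
- have [i_lt le] := rot_up_adj hi viu above.
  move: lt; rewrite swap_map_upv // /swap_map ltn_opp_ord ?upv_gt0 //.
  by rewrite ltnNge le.
- have i_gt0 : 0 < i by case: i hi viu lt below => // _ _ _ /(leq_trans rot_gt0).
  split=> //; rewrite swap_map_upv ?(leq_trans (leq_pred i)) // prednK //.
  by rewrite /swap_map leq_opp_ord ?upv_gt0.
Qed.

Lemma next_up_swap i : i <= len ->
  next_up swap_tree (swap_map (v i)) =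
  if i is j.+1 then Some (swap_map (v j)) else None.
Proof.
have [g _ gK] := injF_bij swap_map_inj.
case: i => [|j] hj.
- apply/next_up_NoneP => w; rewrite -[w]gK (adj_relabel swap_map_inj) => viu.
  by rewrite leqNgt; apply/negP => /(swap_map_adj_gt hj viu) [].
- apply/next_up_SomeP; split.
  + rewrite (adj_relabel swap_map_inj) adjC.
    by have [] := (next_up_SomeP _ _ _).1 (next_up_upv hj).
  + rewrite !swap_map_upv ?(ltnW hj) //; case: (ltnP j.+1 len) => hj'.
    * by rewrite ltn_opp_ord ?upv_gt0 // ltn_upv.
    * by rewrite [upv _ j.+2]/upv nth_default ?ltnS // oppr0 opp_ord_gt0 upv_gt0.
  + move=> w; rewrite -[w]gK (adj_relabel swap_map_inj) => viu lt.
    by have [_] := swap_map_adj_gt hj viu lt.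
Qed.

Lemma up_chain_swap i : i <= len ->
  up_chain swap_tree (swap_map (v i)) (map swap_map (rev (take i (upseq E)))).
Proof.
elim: i => [|i IH] hi; first exact: next_up_swap.
rewrite (take_nth ord0) /= ?ltnS 1?ltnW // rev_rcons /=.
by split; [exact: next_up_swap | exact/IH/ltnW].
Qed.

Lemma upseq_swap : upseq swap_tree = map swap_map (rev (upseq E)).
Proof.
have -> : upseq E = rcons (take len (upseq E)) (v len).
  by rewrite -take_nth // take_oversize.
have := up_chain_swap (leqnn len); rewrite swap_map_upv_last => /up_chain_Lpath.
by rewrite rev_rcons /= swap_map_upv_last /upseq => ->.
Qed.

Lemma size_Lpath_swap : size (Lpath swap_tree ord0) = len.
Proof. by have := congr1 size upseq_swap; rewrite size_map size_rev => -[]. Qed.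

Lemma last_Lpath_swap : last ord0 (Lpath swap_tree ord0) = swap_map ord0.
Proof.
have -> : last ord0 (Lpath swap_tree ord0) = last ord0 (upseq swap_tree) by [].
by rewrite upseq_swap rev_cons map_rcons last_rcons.
Qed.

Lemma deg_swap_tree0 : deg swap_tree ord0 = deg E (last ord0 (Lpath E ord0)).
Proof.
by have := deg_relabel swap_map_inj E (v len); rewrite swap_map_upv_last upv_last.
Qed.

Lemma deg_swap_tree_last :
  deg swap_tree (last ord0 (Lpath swap_tree ord0)) = deg E ord0.
Proof. by rewrite last_Lpath_swap (deg_relabel swap_map_inj). Qed.

End Swap.

Lemma swap_mapK m (E : {set {set 'I_m.+1}}) :
  cancel (swap_map E) (swap_map (swap_tree E)).
Proof.
have c_uniq := uniq_upseq E.
move=> a; rewrite [in LHS]/swap_map /rot_up upseq_swap.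
rewrite next_map ?rev_uniq ?next_rev //; last exact: swap_map_inj.
by rewrite /swap_map /rot_up next_prev // opprK.
Qed.

Lemma swap_treeK m : involutive (@swap_tree m).
Proof. by move=> E; apply: relabelK; exact: swap_mapK. Qed.

Lemma is_tree_swap m (E : {set {set 'I_m.+1}}) :
  is_tree (swap_tree E) = is_tree E.
Proof.
apply/idP/idP; last exact/is_tree_relabel/swap_map_inj.
move/(is_tree_relabel (@swap_map_inj _ (swap_tree E))).
by rewrite -/(swap_tree (swap_tree E)) swap_treeK.
Qed.

Theorem proposition4p1 (n : nat) (hn : (2 <= n)%N) (R : comNzRingType) (x y z : R) :
  G n x y z = G n y x z.
Proof.
case: n hn => // m _ /=; rewrite /Gaux.
rewrite [RHS](reindex_inj (inv_inj (@swap_treeK m))).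
apply: eq_big => [E | E _]; first by rewrite is_tree_swap.
rewrite deg_swap_tree0 deg_swap_tree_last size_Lpath_swap.
by congr (_ * _)%R; rewrite mulrC.
Qed.
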